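(* Let $(X,d)$ be a complete metric space and let $T:X\to X$ be a mapping for which there exists $\alpha\in[0,1)$ such that $$d(Tx,T^2x)+d(T^2x,Ty)+d(Ty,Tx)\le \alpha\,[\,d(x,Tx)+d(Tx,y)+d(y,x)\,]$$ for all $x,y\in X$ with $x\neq y$ and $y\neq Tx$ (i.e. $T$ is a generalized orbital triangular contraction). Suppose that $T$ has no periodic points of prime period $2$. Then $T$ has a unique fixed point.
   Context: A point $x\in X$ is a periodic point of period $n$ of $T$ if $T^n x=x$; the least positive integer $n$ with $T^nx=x$ is its prime period. Thus ''no periodic points of prime period $2$'' means there is no $x\in X$ with $T^2x=x$ and $Tx\neq x$. The condition ''$x\neq y\neq Tx$'' in the paper means $x\neq y$ and $y\neq Tx$. *)

From Stdlib Require Import Reals.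
Open Scope R_scope.

Definition is_metric {X : Type} (d : X -> X -> R) : Prop :=
  (forall x y, 0 <= d x y) /\
  (forall x y, d x y = 0 <-> x = y) /\
  (forall x y, d x y = d y x) /\
  (forall x y z, d x z <= d x y + d y z).

Definition d_cauchy {X : Type} (d : X -> X -> R) (u : nat -> X) : Prop :=
  forall eps, 0 < eps -> exists N, forall m n, (N <= m)%nat -> (N <= n)%nat ->
    d (u m) (u n) < eps.

Definition d_converges {X : Type} (d : X -> X -> R) (u : nat -> X) (l : X) : Prop :=
  forall eps, 0 < eps -> exists N, forall n, (N <= n)%nat -> d (u n) l < eps.

Definition d_complete {X : Type} (d : X -> X -> R) : Prop :=
  forall u, d_cauchy d u -> exists l, d_converges d u l.

Definition gen_orbital_triangular_contraction {X : Type} (d : X -> X -> R)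
    (T : X -> X) : Prop :=
  exists alpha, 0 <= alpha < 1 /\
    forall x y, x <> y -> y <> T x ->
      d (T x) (T (T x)) + d (T (T x)) (T y) + d (T y) (T x)
        <= alpha * (d x (T x) + d (T x) y + d y x).

Definition no_prime_period_2 {X : Type} (T : X -> X) : Prop :=
  forall x, T (T x) = x -> T x = x.

(* Along an orbit x_(n+1) = T x_n with no fixed point, the pair (x_n, x_(n+2))
   is admissible for the contraction (x_(n+2) = x_n would be a 2-periodic
   point), so the perimeter of the triangle (x_n, x_(n+1), x_(n+2)) decays like
   alpha^n and the orbit is Cauchy.  At its limit z, the contraction applied to
   the pair (x_n, z) bounds d(z, Tz) by distances between x_n, x_(n+1) and z,
   which tend to 0.  Two distinct fixed points u, v would give a triangle of
   perimeter 2 d(u, v) <= alpha * 2 d(u, v). *)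
From Stdlib Require Import Reals Lra Lia Classical.
Open Scope R_scope.

Lemma seq_le_pow_mult (q : nat -> R) (a : R) :
  0 <= a -> (forall n, q (S n) <= a * q n) -> forall n, q n <= a ^ n * q O.
Proof.
  intros Ha Hq n; induction n as [|n IH]; simpl; [lra|].
  rewrite Rmult_assoc.
  eapply Rle_trans; [apply Hq|].
  apply Rmult_le_compat_l; assumption.
Qed.

Section Metric.

Context {X : Type} (d : X -> X -> R).
Hypothesis Hd : is_metric d.

Definition perimeter (x y z : X) : R := d x y + d y z + d z x.

Lemma dist_nonneg x y : 0 <= d x y.
Proof. apply Hd. Qed.

Lemma dist_sym x y : d x y = d y x.
Proof. apply Hd. Qed.

Lemma dist_triangle x y z : d x z <= d x y + d y z.
Proof. apply Hd. Qed.

Lemma dist_self x : d x x = 0.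
Proof. apply Hd; reflexivity. Qed.

Lemma dist_pos x y : x <> y -> 0 < d x y.
Proof.
  intro Hxy.
  destruct (Rle_lt_or_eq_dec _ _ (dist_nonneg x y)) as [H|H]; [exact H|].
  exfalso; apply Hxy, Hd; auto.
Qed.

Lemma eq_of_dist_lt_all x y : (forall eps, 0 < eps -> d x y < eps) -> x = y.
Proof.
  intro Hsmall; apply Hd.
  apply Rle_antisym; [|apply dist_nonneg].
  apply Rnot_lt_le; intro Hpos.
  specialize (Hsmall _ Hpos); lra.
Qed.

Lemma dist_le_perimeter x y z : d x y <= perimeter x y z.
Proof. unfold perimeter; pose proof (dist_nonneg y z); pose proof (dist_nonneg z x); lra. Qed.

Section GeometricSteps.

Variables (u : nat -> X) (C a : R).
Hypothesis Ha : 0 <= a < 1.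
Hypothesis Hstep : forall n, d (u n) (u (S n)) <= C * a ^ n.

Lemma geometric_tail_bound n k :
  d (u n) (u (n + k)%nat) * (1 - a) <= C * (a ^ n - a ^ (n + k)).
Proof.
  induction k as [|k IH].
  - rewrite Nat.add_0_r, dist_self; lra.
  - rewrite Nat.add_succ_r; simpl pow.
    assert (Htri : d (u n) (u (S (n + k))) * (1 - a)
                   <= (d (u n) (u (n + k)%nat) + d (u (n + k)%nat) (u (S (n + k)))) * (1 - a))
      by (apply Rmult_le_compat_r; [lra|apply dist_triangle]).
    assert (Hlast : d (u (n + k)%nat) (u (S (n + k))) * (1 - a) <= C * a ^ (n + k) * (1 - a))
      by (apply Rmult_le_compat_r; [lra|apply Hstep]).
    nra.
Qed.

Lemma geometric_steps_cauchy : d_cauchy d u.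
Proof.
  assert (HC : 0 <= C)
    by (pose proof (Hstep O); pose proof (dist_nonneg (u O) (u 1%nat)); simpl in *; lra).
  assert (Hfar : forall eps, 0 < eps -> exists N, forall n m, (N <= n <= m)%nat ->
                   d (u n) (u m) < eps).
  { intros eps Heps.
    set (y := eps * (1 - a) / (C + 1)).
    assert (Hy : 0 < y) by (unfold y; apply Rdiv_lt_0_compat; nra).
    assert (Hy_def : y * (C + 1) = eps * (1 - a)) by (unfold y; field; lra).
    destruct (pow_lt_1_zero a ltac:(rewrite Rabs_right; lra) y Hy) as [N HN].
    exists N; intros n m [HNn Hnm].
    replace m with (n + (m - n))%nat by lia.
    pose proof (geometric_tail_bound n (m - n)) as Htail.
    pose proof (pow_le a (n + (m - n)) (proj1 Ha)).
    pose proof (HN n HNn) as Hsmall.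
    rewrite Rabs_right in Hsmall by (apply Rle_ge, pow_le; lra).
    assert (C * a ^ n <= C * y) by (apply Rmult_le_compat_l; lra).
    apply Rmult_lt_reg_r with (1 - a); nra. }
  intros eps Heps; destruct (Hfar eps Heps) as [N HN].
  exists N; intros m n Hm Hn.
  destruct (Nat.le_gt_cases m n).
  - apply HN; lia.
  - rewrite dist_sym; apply HN; lia.
Qed.

End GeometricSteps.

End Metric.

Section Contraction.

Context {X : Type} (d : X -> X -> R) (T : X -> X) (alpha : R).
Hypothesis Hd : is_metric d.
Hypothesis Halpha : 0 <= alpha < 1.
Hypothesis Hcontr : forall x y, x <> y -> y <> T x ->
  perimeter d (T x) (T (T x)) (T y) <= alpha * perimeter d x (T x) y.

Lemma fixed_point_unique u v : T u = u -> T v = v -> v = u.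
Proof.
  intros Hu Hv.
  destruct (classic (v = u)) as [E|E]; [exact E|exfalso].
  assert (Hvu : v <> T u) by (rewrite Hu; exact E).
  pose proof (Hcontr u v (not_eq_sym E) Hvu) as H.
  rewrite !Hu, Hv in H; unfold perimeter in H.
  rewrite (dist_self d Hd), (dist_sym d Hd v u) in H.
  pose proof (dist_pos d Hd u v (not_eq_sym E)); nra.
Qed.

Hypothesis Hper2 : no_prime_period_2 T.

Lemma perimeter_orbit_contract p :
  T p <> p -> T (T p) <> T p ->
  perimeter d (T p) (T (T p)) (T (T (T p))) <= alpha * perimeter d p (T p) (T (T p)).
Proof.
  intros Hp HTp; apply Hcontr; [|exact HTp].
  intro E; apply Hp, Hper2; symmetry; exact E.
Qed.

Section Orbit.

Variable x0 : X.

Definition orbit (n : nat) : X := Nat.iter n T x0.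

Hypothesis Hnofix : forall n, T (orbit n) <> orbit n.

Lemma orbit_SS_neq n : orbit (S (S n)) <> orbit n.
Proof. intro E; apply (Hnofix n), Hper2; exact E. Qed.

Lemma orbit_avoids_eventually z N :
  exists n, (N <= n)%nat /\ orbit n <> z /\ orbit (S n) <> z.
Proof.
  destruct (classic (orbit N = z)) as [E|E].
  { exists (S N); subst z; split; [lia|split; [apply Hnofix|apply orbit_SS_neq]]. }
  destruct (classic (orbit (S N) = z)) as [E'|E'].
  { exists (S (S N)); subst z; split; [lia|split; [apply Hnofix|apply orbit_SS_neq]]. }
  exists N; auto.
Qed.

Lemma orbit_perimeter_le n :
  perimeter d (orbit n) (orbit (S n)) (orbit (S (S n)))
  <= alpha ^ n * perimeter d (orbit 0) (orbit 1) (orbit 2).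
Proof.
  apply (seq_le_pow_mult (fun n => perimeter d (orbit n) (orbit (S n)) (orbit (S (S n)))));
    [lra|].
  intro m; apply perimeter_orbit_contract; [apply (Hnofix m)|apply (Hnofix (S m))].
Qed.

Lemma orbit_cauchy : d_cauchy d orbit.
Proof.
  apply (geometric_steps_cauchy d Hd orbit
           (perimeter d (orbit 0) (orbit 1) (orbit 2)) alpha Halpha).
  intro n; rewrite Rmult_comm.
  eapply Rle_trans; [apply dist_le_perimeter, Hd|apply orbit_perimeter_le].
Qed.

Lemma orbit_limit_fixed z : d_converges d orbit z -> T z = z.
Proof.
  intro Hz; symmetry; apply (eq_of_dist_lt_all d Hd); intros eps Heps.
  destruct (Hz (eps / 5)) as [N HN]; [lra|].
  destruct (orbit_avoids_eventually z N) as [n [HNn [Hn HSn]]].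
  pose proof (Hcontr (orbit n) z Hn (not_eq_sym HSn)) as Hc; unfold perimeter in Hc.
  change (T (orbit n)) with (orbit (S n)) in Hc.
  change (T (orbit (S n))) with (orbit (S (S n))) in Hc.
  pose proof (HN n HNn); pose proof (HN (S n) ltac:(lia)).
  pose proof (dist_nonneg d Hd (orbit (S n)) (orbit (S (S n)))).
  pose proof (dist_nonneg d Hd (orbit (S (S n))) (T z)).
  pose proof (dist_nonneg d Hd (orbit n) (orbit (S n))).
  pose proof (dist_nonneg d Hd (orbit (S n)) z).
  pose proof (dist_nonneg d Hd z (orbit n)).
  pose proof (dist_triangle d Hd z (orbit (S n)) (T z)).
  pose proof (dist_triangle d Hd (orbit n) z (orbit (S n))).
  rewrite (dist_sym d Hd (T z)), (dist_sym d Hd z (orbit n)),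
    (dist_sym d Hd z (orbit (S n))) in *.
  nra.
Qed.

End Orbit.

Hypothesis Hcomplete : d_complete d.

Lemma fixed_point_exists (x0 : X) : exists z, T z = z.
Proof.
  destruct (classic (exists n, T (orbit x0 n) = orbit x0 n)) as [[n Hn]|Hno]; [eauto|].
  assert (Hnofix : forall n, T (orbit x0 n) <> orbit x0 n) by (intros n E; eauto).
  destruct (Hcomplete _ (orbit_cauchy x0 Hnofix)) as [z Hz].
  exists z; exact (orbit_limit_fixed x0 Hnofix z Hz).
Qed.

End Contraction.

Theorem theorem3p1 (X : Type) (x0 : X) (d : X -> X -> R) (T : X -> X)
  (Hd : is_metric d) (Hc : d_complete d)
  (HT : gen_orbital_triangular_contraction d T)
  (Hp : no_prime_period_2 T) :
  exists x, T x = x /\ forall y, T y = y -> y = x.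
Proof.
  destruct HT as [alpha [Halpha Hcontr]].
  destruct (fixed_point_exists d T alpha Hd Halpha Hcontr Hp Hc x0) as [z Hz].
  exists z; split; [exact Hz|].
  intros y Hy; exact (fixed_point_unique d T alpha Hd Halpha Hcontr z y Hz Hy).
Qed.
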